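(* Let $P_n$ be the path on $n$ vertices. (1) If $n$ is even, then $\mathcal{Z}^{\mathrm{TE}}_-(P_n)=\mathcal{Z}^{\mathrm{TS}}_-(P_n)\cong K_1$. (2) If $n$ is odd, then $\mathcal{Z}^{\mathrm{TE}}_-(P_n)\cong K_{(n+1)/2}$ and $\mathcal{Z}^{\mathrm{TS}}_-(P_n)\cong \frac{n+1}{2}K_1$ (the edgeless graph on $(n+1)/2$ vertices).
   Context: Skew forcing: vertices are colored blue or white; if any vertex $u$ (blue or white) has exactly one white neighbor $v$, then $u$ may force $v$ to become blue. A skew forcing set is a (possibly empty) set of initially blue vertices from which repeated application of this rule turns every vertex blue; $\mathrm{Z}_-(G)$ is the minimum size of a skew forcing set. $\mathcal{Z}^{\mathrm{TE}}_-(G)$ has as vertices the minimum skew forcing sets of $G$, with $S_1S_2$ an edge iff $S_1\setminus S_2=\{v_1\}$ and $S_2\setminus S_1=\{v_2\}$ for some vertices $v_1,v_2$; $\mathcal{Z}^{\mathrm{TS}}_-(G)$ has the same vertices with the additional requirement $v_1v_2\in E(G)$. *)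

(* Simple graphs are symmetric irreflexive relations on a finType. *)
From mathcomp Require Import all_boot all_order.
Set Implicit Arguments. Unset Strict Implicit. Unset Printing Implicit Defensive.

Section SkewForcing.
Variable T : finType.
Variable e : rel T.

Definition white_nbrs (B : {set T}) (u : T) : {set T} :=
  [set w | e u w & w \notin B].

(* one application of the skew forcing rule: some vertex u (blue or white)
   has exactly one white neighbour v, which becomes blue *)
Definition skew_step : rel {set T} := fun B B' =>
  [exists u, exists v, (white_nbrs B u == [set v]) && (B' == v |: B)].

Definition skew_forcing_set (S : {set T}) : bool :=
  connect skew_step S [set: T].

Definition min_skew_forcing_set (S : {set T}) : bool :=
  skew_forcing_set S &&
  [forall S' : {set T}, skew_forcing_set S' ==> (#|S| <= #|S'|)].

(* vertex set of Z^TE_-(G) and Z^TS_-(G) *)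
Definition ZV : {set {set T}} := [set S | min_skew_forcing_set S].

Definition TE_adj : rel {set T} := fun S1 S2 =>
  [exists v1, exists v2, (S1 :\: S2 == [set v1]) && (S2 :\: S1 == [set v2])].

Definition TS_adj : rel {set T} := fun S1 S2 =>
  [exists v1, exists v2,
     [&& S1 :\: S2 == [set v1], S2 :\: S1 == [set v2] & e v1 v2]].

End SkewForcing.

Definition path_graph (n : nat) : rel 'I_n :=
  fun i j => (i.+1 == j :> nat) || (j.+1 == i :> nat).

Definition complete_graph (m : nat) : rel 'I_m := fun i j => i != j.
Definition edgeless_graph (m : nat) : rel 'I_m := fun _ _ => false.

Definition graph_iso (X : finType) (V : {set X}) (adj : rel X)
    (m : nat) (adj' : rel 'I_m) : Prop :=
  exists f : X -> 'I_m,
    [/\ {in V &, injective f}, f @: V = [set: 'I_m] &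
        {in V &, forall x y, adj x y = adj' (f x) (f y)}].

Arguments path_graph n : clear implicits.
Arguments complete_graph m : clear implicits.
Arguments edgeless_graph m : clear implicits.

(* On the path 0 - 1 - ... - (n-1) the even vertices 0, 2, 4, ... force the odd
   vertices one after another from any start, and once both ends of an edge are
   blue the blue interval grows to the whole path.  For n even the last vertex is
   odd and forces its neighbour, so the empty set is skew forcing.  For n odd both
   end vertices are even, and while all blue vertices are odd no vertex can force
   an even one: its other neighbour is even, hence white, as well.  So the minimum
   skew forcing sets are the singletons {v} with v even; two distinct ones are
   token-exchange adjacent, but never token-sliding adjacent, since even vertices
   are pairwise non-adjacent. *)

From mathcomp Require Import all_boot all_order.
From mathcomp Require Import zify.
Set Implicit Arguments. Unset Strict Implicit. Unset Printing Implicit Defensive.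

Section SkewForcing.
Variables (T : finType) (e : rel T).

Lemma connect_force (B : {set T}) (u w : T) :
  e u w -> (forall x, e u x -> x != w -> x \in B) ->
  connect (skew_step e) B (w |: B).
Proof.
move=> euw blue_nbrs; have [wB | wNB] := boolP (w \in B).
  by rewrite (setUidPr _) ?sub1set ?connect0.
apply/connect1/existsP; exists u; apply/existsP; exists w; rewrite eqxx andbT.
apply/eqP/setP => x; rewrite !inE.
have [-> | xw] := eqVneq x w; first by rewrite euw.
by apply/negbTE/nandP; case eux: (e u x); [right; rewrite negbK blue_nbrs | left].
Qed.

Lemma connect_chain (B : {set T}) (S : nat -> {set T}) :
  S 0 \subset B -> (forall k, connect (skew_step e) (B :|: S k) (B :|: S k.+1)) ->
  forall k, connect (skew_step e) B (B :|: S k).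
Proof.
move=> S0B step; elim=> [|k IH]; first by rewrite (setUidPl _) ?connect0.
exact: connect_trans IH (step k).
Qed.

Lemma min_skew_forcing_setE (S0 : {set T}) :
  skew_forcing_set e S0 -> (forall S, skew_forcing_set e S -> #|S0| <= #|S|) ->
  forall S, min_skew_forcing_set e S = skew_forcing_set e S && (#|S| == #|S0|).
Proof.
move=> fS0 minS0 S; apply/andP/andP => [[fS /forallP minS] | [fS /eqP ->]].
  by split=> //; rewrite eqn_leq minS0 // andbT; exact: implyP (minS S0) fS0.
by split=> //; apply/forallP => S'; apply/implyP; exact: minS0.
Qed.

Lemma TE_adj_set1 (a b : T) : TE_adj [set a] [set b] = (a != b).
Proof.
have setD11 (x y : T) : x != y -> [set x] :\: [set y] = [set x].
  by move=> xy; apply/setP => z; rewrite !inE andb_idl // => /eqP ->.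
apply/existsP/idP => [[v1 /existsP [v2 /andP [/eqP D1 _]]] | ab].
  by apply: contraTneq (set11 v1) => ab; rewrite -D1 ab setDv inE.
exists a; apply/existsP; exists b.
by rewrite !setD11 ?eqxx // eq_sym.
Qed.

Lemma TE_adj_id (S : {set T}) : TE_adj S S = false.
Proof.
apply/negbTE/existsP => [[v1 /existsP [v2 /andP [/eqP D1 _]]]].
by have := set11 v1; rewrite -D1 setDv inE.
Qed.

Lemma TS_adj_TE_adj (S1 S2 : {set T}) : TS_adj e S1 S2 -> TE_adj S1 S2.
Proof.
case/existsP => v1 /existsP [v2 /and3P [D1 D2 _]].
by apply/existsP; exists v1; apply/existsP; exists v2; rewrite D1 D2.
Qed.

Lemma TS_adj_id (S : {set T}) : TS_adj e S S = false.
Proof. by apply/negbTE/negP => /TS_adj_TE_adj; rewrite TE_adj_id. Qed.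

Lemma TS_adj_set1 (a b : T) : TS_adj e [set a] [set b] -> e a b.
Proof.
case/existsP => v1 /existsP [v2 /and3P [/eqP D1 /eqP D2 ev]].
have := set11 v1; have := set11 v2; rewrite -D1 -D2 !inE.
by case/andP => _ /eqP <- /andP [_ /eqP <-].
Qed.

End SkewForcing.

Lemma graph_iso_enum (X : finType) (V : {set X}) (adj : rel X) (k : nat)
    (adj' : rel 'I_k.+1) (g : 'I_k.+1 -> X) :
  injective g -> V = [set g i | i : 'I_k.+1] ->
  (forall i j, adj (g i) (g j) = adj' i j) -> graph_iso V adj adj'.
Proof.
move=> g_inj -> adjE; pose f x := odflt ord0 [pick i | g i == x].
have gK : cancel g f.
  by move=> i; rewrite /f; case: pickP => [j /eqP/g_inj // | /(_ i)]; rewrite eqxx.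
exists f; split.
- by move=> _ _ /imsetP [i _ ->] /imsetP [j _ ->]; rewrite !gK => ->.
- by apply/setP => i; rewrite inE; apply/imsetP; exists (g i); rewrite ?imset_f ?gK.
- by move=> _ _ /imsetP [i _ ->] /imsetP [j _ ->]; rewrite !gK.
Qed.

Lemma graph_iso_set1 (X : finType) (x : X) (adj : rel X) :
  adj x x = false -> graph_iso [set x] adj (complete_graph 1).
Proof.
move=> adjxx; apply: (graph_iso_enum (g := fun=> x)) => [i j _ | | i j].
- by rewrite (ord1 i) (ord1 j).
- by apply/setP => y; rewrite !inE; apply/eqP/imsetP => [->|[i _ ->]] //; exists ord0.
- by rewrite adjxx (ord1 i) (ord1 j) /complete_graph eqxx.
Qed.

Section PathGraph.
Variable m : nat.
Local Notation n := m.+1.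
Local Notation e := (path_graph n).

Definition odd_vertices : {set 'I_n} := [set x : 'I_n | odd x].

(* [x + w = u.*2] singles out the neighbour of [u] other than [w]. *)
Lemma connect_path_force (B : {set 'I_n}) (u w : 'I_n) :
  e u w -> (forall x : 'I_n, x + w = u.*2 -> x \in B) ->
  connect (skew_step e) B (w |: B).
Proof.
move=> euw mirror_blue; apply: (connect_force euw) => x eux xw; apply: mirror_blue.
by move: euw eux xw; rewrite /path_graph -val_eqE /=; lia.
Qed.

Lemma connect_odd_vertices (B : {set 'I_n}) :
  connect (skew_step e) B (B :|: odd_vertices).
Proof.
pose S k := [set x : 'I_n | odd x && (x < k)].
have -> : odd_vertices = S n by apply/setP => x; rewrite !inE ltn_ord andbT.
apply: connect_chain => [|k]; first by apply/subsetP => x; rewrite inE ltn0 andbF.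
have [/andP [ok kn] | stop] := boolP (odd k && (k < n)); last first.
  by have -> : S k.+1 = S k by apply/setP => x; rewrite !inE; have := ltn_ord x; lia.
have -> : S k.+1 = inord k |: S k.
  by apply/setP => x; rewrite !inE -val_eqE /= inordK //; lia.
rewrite setUCA; apply: (connect_path_force (u := inord k.-1)).
  by rewrite /path_graph !inordK //; lia.
by move=> x; rewrite !inordK ?inE; lia.
Qed.

Lemma connect_grow_right (B : {set 'I_n}) (i : nat) :
  i.+1 < n -> [set x : 'I_n | i <= x <= i.+1] \subset B ->
  connect (skew_step e) B (B :|: [set x : 'I_n | i <= x]).
Proof.
move=> i1n edgeB; pose S k := [set x : 'I_n | i <= x <= i + k.+1].
have -> : [set x : 'I_n | i <= x] = S n.
  by apply/setP => x; rewrite !inE; have := ltn_ord x; lia.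
apply: connect_chain => [|k]; first by rewrite /S addn1.
have [jn | stop] := ltnP (i + k.+2) n; last first.
  by have -> : S k.+1 = S k by apply/setP => x; rewrite !inE; have := ltn_ord x; lia.
have -> : S k.+1 = inord (i + k.+2) |: S k.
  by apply/setP => x; rewrite !inE -val_eqE /= inordK //; lia.
rewrite setUCA; apply: (connect_path_force (u := inord (i + k.+1))).
  by rewrite /path_graph !inordK; lia.
by move=> x; rewrite !inordK ?inE; lia.
Qed.

Lemma connect_grow_left (B : {set 'I_n}) (i : nat) :
  i.+1 < n -> [set x : 'I_n | i <= x <= i.+1] \subset B ->
  connect (skew_step e) B (B :|: [set x : 'I_n | x <= i.+1]).
Proof.
move=> i1n edgeB; pose S k := [set x : 'I_n | i - k <= x <= i.+1].
have -> : [set x : 'I_n | x <= i.+1] = S n by apply/setP => x; rewrite !inE; lia.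
apply: connect_chain => [|k]; first by rewrite /S subn0.
have [ki | stop] := ltnP k i; last first.
  by have -> : S k.+1 = S k by apply/setP => x; rewrite !inE; lia.
have -> : S k.+1 = inord (i - k.+1) |: S k.
  by apply/setP => x; rewrite !inE -val_eqE /= inordK; lia.
rewrite setUCA; apply: (connect_path_force (u := inord (i - k))).
  by rewrite /path_graph !inordK; lia.
by move=> x; rewrite !inordK ?inE; lia.
Qed.

Lemma connect_blue_edge (B : {set 'I_n}) (i : nat) :
  i.+1 < n -> [set x : 'I_n | i <= x <= i.+1] \subset B ->
  connect (skew_step e) B [set: 'I_n].
Proof.
move=> i1n edgeB; apply: connect_trans (connect_grow_right i1n edgeB) _.
have edgeB' := subset_trans edgeB (subsetUl B [set x : 'I_n | i <= x]).
apply: connect_trans (connect_grow_left i1n edgeB') _.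
have -> // : B :|: [set x : 'I_n | i <= x] :|: [set x : 'I_n | x <= i.+1] = setT.
by apply/setP => x; rewrite !inE; lia.
Qed.

Lemma skew_forcing_set0 : ~~ odd n -> skew_forcing_set e set0.
Proof.
move=> en; apply: connect_trans (connect_odd_vertices set0) _; rewrite set0U.
apply: connect_trans (connect_path_force (u := ord_max) (w := inord m.-1) _ _) _.
- by rewrite /path_graph inordK /=; lia.
- by move=> x; rewrite inordK /=; have := ltn_ord x; lia.
apply: (connect_blue_edge (i := m.-1)); first lia.
by apply/subsetP => x; rewrite !inE -val_eqE /= inordK; lia.
Qed.

Lemma skew_step_odd_vertices (B B' : {set 'I_n}) :
  odd n -> skew_step e B B' -> B \subset odd_vertices -> B' \subset odd_vertices.
Proof.
move=> on /existsP [u /existsP [w /andP [/eqP white_w /eqP ->]]] Bodd.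
rewrite subUset sub1set Bodd andbT inE; apply/negPn/negP => ew.
have euw : e u w by have := set11 w; rewrite -white_w inE => /andP [].
move: euw (ltn_ord u) (ltn_ord w); rewrite /path_graph => euw ult wlt.
have y_lt : u.*2 - w < n by lia.
have : inord (u.*2 - w) \in white_nbrs e B u.
  rewrite inE /path_graph (inordK y_lt); apply/andP; split; first lia.
  by apply: contra ew => /(subsetP Bodd); rewrite inE (inordK y_lt); lia.
by rewrite white_w inE -val_eqE /= (inordK y_lt); lia.
Qed.

Lemma odd_vertices_not_forcing (S : {set 'I_n}) :
  odd n -> S \subset odd_vertices -> ~~ skew_forcing_set e S.
Proof.
move=> on Sodd; apply/negP => /connectP [p].
elim: p S Sodd => [|S1 p IH] S Sodd /= => [_ ST | /andP [step]].
  by have := subsetP Sodd ord0; rewrite -ST !inE => /(_ isT).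
exact/IH/(skew_step_odd_vertices on step).
Qed.

Lemma skew_forcing_set1 (v : 'I_n) : odd n -> skew_forcing_set e [set v] = ~~ odd v.
Proof.
move=> on; apply/idP/idP => [fv | ev].
  by apply: contraL fv => ov; apply: odd_vertices_not_forcing; rewrite // sub1set inE.
apply: connect_trans (connect_odd_vertices _) _.
have [m0 | m_gt0] := posnP m.
  rewrite (_ : _ :|: _ = setT) ?connect0 //; apply/setP => x.
  by rewrite !inE -val_eqE /=; have := ltn_ord x; have := ltn_ord v; lia.
have [vm | vm] := ltnP v m.
  apply: (connect_blue_edge (i := v)); first by rewrite ltnS.
  by apply/subsetP => x; rewrite !inE -val_eqE /=; lia.
apply: (connect_blue_edge (i := m.-1)); first lia.
by apply/subsetP => x; rewrite !inE -val_eqE /=; have := ltn_ord v; lia.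
Qed.

Lemma ZV_path_even : ~~ odd n -> ZV e = [set set0].
Proof.
move=> en; have f0 := skew_forcing_set0 en.
apply/setP => S; rewrite !inE (min_skew_forcing_setE f0) => [|S' _]; last by rewrite cards0.
by rewrite cards0 cards_eq0 andb_idl // => /eqP ->.
Qed.

Definition even_vertex (i : 'I_(m./2).+1) : 'I_n := inord i.*2.

Lemma even_vertexE i : even_vertex i = i.*2 :> nat.
Proof. by rewrite inordK //; have := ltn_ord i; lia. Qed.

Lemma even_vertex_inj : injective even_vertex.
Proof. by move=> i j /(congr1 val) /=; rewrite !even_vertexE => ij; apply: ord_inj; lia. Qed.

Lemma ZV_path_odd : odd n -> ZV e = [set [set even_vertex i] | i : 'I_(m./2).+1].
Proof.
move=> on; have f0 : skew_forcing_set e [set ord0] by rewrite skew_forcing_set1.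
apply/setP => S; rewrite inE (min_skew_forcing_setE f0) => [|S' fS']; last first.
  rewrite cards1 card_gt0; apply: contraTneq fS' => ->.
  by apply: odd_vertices_not_forcing; rewrite ?sub0set.
rewrite cards1; apply/andP/imsetP => [[fS /cards1P [v Sv]] | [i _ ->]].
  move: fS; rewrite Sv skew_forcing_set1 // => ev; exists (inord v./2) => //; congr [set _].
  by apply: ord_inj; rewrite even_vertexE inordK; have := ltn_ord v; lia.
by rewrite skew_forcing_set1 // even_vertexE odd_double cards1.
Qed.

End PathGraph.

Theorem theorem5p7 (n : nat) (hn : 0 < n) :
  (~~ odd n ->
     {in ZV (path_graph n) &, forall S1 S2,
         TE_adj S1 S2 = TS_adj (path_graph n) S1 S2} /\
     graph_iso (ZV (path_graph n)) (@TE_adj _) (complete_graph 1) /\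
     graph_iso (ZV (path_graph n)) (TS_adj (path_graph n)) (complete_graph 1)) /\
  (odd n ->
     graph_iso (ZV (path_graph n)) (@TE_adj _) (complete_graph (n.+1 %/ 2)) /\
     graph_iso (ZV (path_graph n)) (TS_adj (path_graph n)) (edgeless_graph (n.+1 %/ 2))).
Proof.
case: n hn => // m _; split => [en | on].
  rewrite ZV_path_even //; split.
    by move=> S1 S2; rewrite !inE => /eqP -> /eqP ->; rewrite TE_adj_id TS_adj_id.
  by split; apply: graph_iso_set1; rewrite ?TE_adj_id ?TS_adj_id.
have -> : m.+2 %/ 2 = (m./2).+1 by lia.
have g_inj : injective (fun i => [set @even_vertex m i]).
  by move=> i j /set1_inj /even_vertex_inj.
rewrite ZV_path_odd //; split; apply: (graph_iso_enum g_inj) => // i j.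
  by rewrite TE_adj_set1 (inj_eq (@even_vertex_inj m)).
by apply/negbTE/negP => /TS_adj_set1; rewrite /path_graph !even_vertexE; lia.
Qed.
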